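(* Let $0<\phi<\pi/6$, $\nu>0$. For $F,G\in\mathcal A_\phi$ and every integer $j\ge0$, $$|(p^jF)*G(p,t)|\le\frac{|p|^je^{\nu|p|}}{M_0(1+|p|^2)}\|F\|_\nu\|G\|_\nu\qquad\text{for all }(p,t)\in\overline{\mathcal S_\phi}\times[0,T].$$
   Context: $T>0$; $\mathcal S_\phi=\{p:\arg p\in(-\phi,\phi),0<|p|<\infty\}$, $\mathcal K=\overline{\mathcal S_\phi}\times[0,T]$; $\|G\|_\nu=M_0\sup_{(p,t)\in\mathcal K}(1+|p|^2)e^{-\nu|p|}|G(p,t)|$ with $M_0=\sup_{s\ge0}\frac{2(1+s^2)(\ln(1+s^2)+s\arctan s)}{s(s^2+4)}$. $\mathcal A_\phi$ is the space of functions $F(p,t)$ analytic in $p\in\mathcal S_\phi$, continuous on $\overline{\mathcal S_\phi}$ for each $t\in[0,T]$, with $\|F\|_\nu<\infty$. Convolution: $(F*G)(p,t)=\int_0^pF(s,t)G(p-s,t)\,ds$ along the segment $[0,p]$; $(p^jF)$ denotes the function $(p,t)\mapsto p^jF(p,t)$. *)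

From Stdlib Require Import Reals.
From Coquelicot Require Import Coquelicot.
Open Scope R_scope.

Definition open_sector (phi : R) (p : C) : Prop :=
  exists r theta : R, 0 < r /\ - phi < theta < phi /\
    p = (r * cos theta, r * sin theta)%R.

Definition closed_sector (phi : R) (p : C) : Prop :=
  exists r theta : R, 0 <= r /\ - phi <= theta <= phi /\
    p = (r * cos theta, r * sin theta)%R.

(* M_0 = sup_{s >= 0} 2(1+s^2)(ln(1+s^2) + s arctan s) / (s (s^2+4))
   (the expression is a 0/0 form at s = 0, so the sup is taken over s > 0,
   which gives the same supremum). *)
Definition M0 : R :=
  real (Lub_Rbar (fun y => exists s : R, 0 < s /\
    y = 2 * (1 + s ^ 2) * (ln (1 + s ^ 2) + s * atan s) / (s * (s ^ 2 + 4)))).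

Definition weighted_vals (T phi nu : R) (G : C -> R -> C) (y : R) : Prop :=
  exists (p : C) (t : R), closed_sector phi p /\ 0 <= t <= T /\
    y = (1 + Cmod p ^ 2) * exp (- nu * Cmod p) * Cmod (G p t).

Definition nu_norm (T phi nu : R) (G : C -> R -> C) : R :=
  M0 * real (Lub_Rbar (weighted_vals T phi nu G)).

Definition in_A (T phi nu : R) (F : C -> R -> C) : Prop :=
  (forall t, 0 <= t <= T ->
     (forall p, open_sector phi p ->
        @ex_derive C_AbsRing C_NormedModule (fun z => F z t) p) /\
     (forall p, closed_sector phi p ->
        filterlim (fun z => F z t) (within (closed_sector phi) (locally p))
                  (locally (F p t)))) /\
  is_finite (Lub_Rbar (weighted_vals T phi nu F)).

(* Convolution along the segment [0,p]:
   (F*G)(p,t) = int_0^p F(s,t) G(p-s,t) ds = int_0^1 F(tau p,t) G(p - tau p,t) p dtau *)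
Definition conv (F G : C -> R -> C) (p : C) (t : R) : C :=
  @RInt C_R_CompleteNormedModule
    (fun tau : R => (F (RtoC tau * p)%C t * G (p - RtoC tau * p)%C t * p)%C) 0 1.

Definition pmul (j : nat) (F : C -> R -> C) : C -> R -> C :=
  fun p t => (Cpow p j * F p t)%C.

(* On the segment [0, p] the weighted norms give
   |F(tau p)| <= ||F|| e^(nu tau |p|) / (M0 (1 + tau^2 |p|^2)), and likewise for G at
   (1 - tau) p, while |tau p|^j <= |p|^j.  The two exponentials multiply to e^(nu |p|),
   and what is left is the integral of |p| / ((1 + tau^2 |p|^2) (1 + (1 - tau)^2 |p|^2))
   over [0, 1].  Partial fractions evaluate it to r(|p|) / (1 + |p|^2), where r is exactly
   the function whose supremum defines M0, so it is at most M0 / (1 + |p|^2). *)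

From Stdlib Require Import Reals Lra.
From Coquelicot Require Import Coquelicot.
Open Scope R_scope.

Definition sector_continuous (phi : R) (f : C -> C) : Prop :=
  forall q, closed_sector phi q ->
    filterlim f (within (closed_sector phi) (locally q)) (locally (f q)).

Lemma closed_sector_scale (phi r : R) (p : C) :
  closed_sector phi p -> 0 <= r -> closed_sector phi (RtoC r * p)%C.
Proof.
  intros [rp [th [Hrp [Hth ->]]]] Hr.
  exists (r * rp), th; split; [nra | split; [lra |]].
  unfold Cmult, RtoC; simpl; f_equal; ring.
Qed.

Lemma Cmod_scale (r : R) (p : C) : 0 <= r -> Cmod (RtoC r * p)%C = r * Cmod p.
Proof. intros Hr; rewrite Cmod_mult, Cmod_R, Rabs_pos_eq by exact Hr; reflexivity. Qed.

Lemma Cminus_scale (r : R) (p : C) : (p - RtoC r * p)%C = (RtoC (1 - r) * p)%C.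
Proof. destruct p; unfold Cminus, Cplus, Copp, Cmult, RtoC; simpl; f_equal; ring. Qed.

Lemma RtoC_mult_scal (r : R) (p : C) :
  (RtoC r * p)%C = @scal R_AbsRing C_R_NormedModule r p.
Proof.
  destruct p; unfold Cmult, RtoC, scal; simpl; unfold prod_scal, scal; simpl.
  unfold mult; simpl; f_equal; ring.
Qed.

Lemma filterlim_C_AbsRing {T : Type} (F : (T -> Prop) -> Prop) (f : T -> C) (c : C) :
  filterlim f F (@locally C_UniformSpace c) ->
  filterlim f F (@locally (AbsRing_UniformSpace C_AbsRing) c).
Proof. intros Hf P HP; apply Hf, locally_C, HP. Qed.

Lemma filterlim_Cmult {T : Type} (F : (T -> Prop) -> Prop) {FF : Filter F}
    (f g : T -> C) (a b : C) :
  filterlim f F (locally a) -> filterlim g F (locally b) ->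
  filterlim (fun x => f x * g x)%C F (locally (a * b)%C).
Proof.
  intros Hf Hg.
  eapply filterlim_comp_2;
    [exact (filterlim_C_AbsRing _ _ _ Hf) | exact (filterlim_C_AbsRing _ _ _ Hg) |].
  intros P HP; apply (@filterlim_mult C_AbsRing a b), locally_C, HP.
Qed.

Lemma filterlim_Cpow {T : Type} (F : (T -> Prop) -> Prop) {FF : Filter F}
    (f : T -> C) (a : C) (j : nat) :
  filterlim f F (locally a) -> filterlim (fun x => Cpow (f x) j) F (locally (Cpow a j)).
Proof.
  intros Hf; induction j as [| j IH]; simpl.
  - apply filterlim_const.
  - apply filterlim_Cmult; assumption.
Qed.

Lemma sector_continuous_pmul (phi : R) (f : C -> C) (j : nat) :
  sector_continuous phi f -> sector_continuous phi (fun z => Cpow z j * f z)%C.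
Proof.
  intros Hf q Hq; apply (filterlim_Cmult _ (fun z => Cpow z j) f); [| exact (Hf q Hq)].
  apply filterlim_Cpow; [exact _ | apply filter_le_within].
Qed.

Lemma continuous_sector_ray (phi : R) (f : C -> C) (p : C) (r : R -> R) (x : R) :
  closed_sector phi p -> (forall y, 0 <= r y) -> continuous r x ->
  sector_continuous phi f -> continuous (fun y => f (RtoC (r y) * p)%C) x.
Proof.
  intros Hp Hr0 Hr Hf.
  apply (filterlim_comp _ _ _ _ f _
           (within (closed_sector phi) (locally (RtoC (r x) * p)%C)));
    [| exact (Hf _ (closed_sector_scale _ _ _ Hp (Hr0 x)))].
  assert (Hray : continuous (fun y => RtoC (r y) * p)%C x).
  { apply (continuous_ext (fun y => @scal R_AbsRing C_R_NormedModule (r y) p));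
      [intros y; symmetry; apply RtoC_mult_scal |].
    apply continuous_scal_l, Hr. }
  intros P HP; specialize (Hray _ HP); unfold filtermap in *.
  apply filter_imp with (2 := Hray); intros y Hy; apply Hy, closed_sector_scale; auto.
Qed.

Definition clamp01 (x : R) : R := (Rabs x - Rabs (x - 1) + 1) / 2.

Lemma clamp01_id (x : R) : 0 <= x <= 1 -> clamp01 x = x.
Proof. intros Hx; unfold clamp01; rewrite Rabs_pos_eq, Rabs_left1 by lra; field. Qed.

Lemma clamp01_bounds (x : R) : 0 <= clamp01 x <= 1.
Proof.
  unfold clamp01; destruct (Rle_dec 0 x), (Rle_dec 1 x);
    rewrite ?(Rabs_pos_eq x), ?(Rabs_left1 x), ?(Rabs_pos_eq (x - 1)), ?(Rabs_left1 (x - 1))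
      by lra; lra.
Qed.

Lemma continuous_clamp01 (x : R) : continuous clamp01 x.
Proof. apply continuity_pt_filterlim; unfold clamp01; reg. Qed.

Lemma ex_RInt_conv_integrand (phi : R) (f g : C -> C) (p : C) :
  closed_sector phi p -> sector_continuous phi f -> sector_continuous phi g ->
  @ex_RInt C_R_CompleteNormedModule
    (fun tau : R => f (RtoC tau * p)%C * g (p - RtoC tau * p)%C * p)%C 0 1.
Proof.
  intros Hp Hf Hg.
  (* The ray tau p leaves the sector for tau < 0, while [ex_RInt_continuous] asks for
     continuity on a neighbourhood of [0, 1]: integrate the clamped integrand instead. *)
  apply (ex_RInt_ext (fun tau => f (RtoC (clamp01 tau) * p)%C
                               * g (RtoC (1 - clamp01 tau) * p)%C * p)%C).
  { intros tau; rewrite Rmin_left, Rmax_right by lra; intros Htau.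
    rewrite clamp01_id, Cminus_scale by lra; reflexivity. }
  apply (@ex_RInt_continuous C_R_CompleteNormedModule); intros x _.
  apply (filterlim_Cmult (locally x));
    [apply (filterlim_Cmult (locally x)) | apply filterlim_const].
  - apply (continuous_sector_ray phi); auto using continuous_clamp01.
    intros y; apply clamp01_bounds.
  - apply (continuous_sector_ray phi g p (fun y => 1 - clamp01 y)); auto.
    + intros y; pose proof (clamp01_bounds y); lra.
    + apply continuity_pt_filterlim; unfold clamp01; reg.
Qed.

Definition weighted_sup (T phi nu : R) (F : C -> R -> C) : R :=
  real (Lub_Rbar (weighted_vals T phi nu F)).

Definition weighted_bound (phi nu a : R) (f : C -> C) : Prop :=
  forall q, closed_sector phi q -> Cmod (f q) <= a * exp (nu * Cmod q) / (1 + Cmod q ^ 2).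

Lemma weighted_bound_nonneg (phi nu a : R) (f : C -> C) (p : C) :
  closed_sector phi p -> weighted_bound phi nu a f -> 0 <= a.
Proof.
  intros Hp Hf; specialize (Hf p Hp).
  assert (Hd : 0 < 1 + Cmod p ^ 2) by (pose proof (pow2_ge_0 (Cmod p)); lra).
  assert (Hw : 0 < exp (nu * Cmod p) / (1 + Cmod p ^ 2))
    by (apply Rdiv_lt_0_compat; [apply exp_pos | exact Hd]).
  pose proof (Cmod_ge_0 (f p)); unfold Rdiv in Hf, Hw; nra.
Qed.

Lemma weighted_bound_weighted_sup (T phi nu : R) (F : C -> R -> C) (t : R) :
  is_finite (Lub_Rbar (weighted_vals T phi nu F)) -> 0 <= t <= T ->
  weighted_bound phi nu (weighted_sup T phi nu F) (fun q => F q t).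
Proof.
  intros Hfin Ht q Hq.
  assert (Hub := proj1 (Lub_Rbar_correct (weighted_vals T phi nu F))).
  rewrite <- Hfin in Hub.
  assert (Hle : (1 + Cmod q ^ 2) * exp (- nu * Cmod q) * Cmod (F q t)
                <= weighted_sup T phi nu F) by (apply Hub; exists q, t; auto).
  assert (Hd : 0 < 1 + Cmod q ^ 2) by (pose proof (pow2_ge_0 (Cmod q)); lra).
  assert (Hexp : exp (- nu * Cmod q) * exp (nu * Cmod q) = 1)
    by (rewrite <- exp_plus, <- exp_0; f_equal; ring).
  assert (Hc : Cmod (F q t) = (1 + Cmod q ^ 2) * exp (- nu * Cmod q) * Cmod (F q t)
                              * exp (nu * Cmod q) / (1 + Cmod q ^ 2)).
  { transitivity (Cmod (F q t) * (exp (- nu * Cmod q) * exp (nu * Cmod q))).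
    - rewrite Hexp; ring.
    - field; lra. }
  rewrite Hc at 1; unfold Rdiv.
  apply Rmult_le_compat_r; [left; apply Rinv_0_lt_compat, Hd |].
  apply Rmult_le_compat_r; [left; apply exp_pos | exact Hle].
Qed.

Definition M0_ratio (s : R) : R :=
  2 * (1 + s ^ 2) * (ln (1 + s ^ 2) + s * atan s) / (s * (s ^ 2 + 4)).

Lemma M0_ratio_pos (s : R) : 0 < s -> 0 < M0_ratio s.
Proof.
  intros Hs; unfold M0_ratio.
  assert (Hln : 0 < ln (1 + s ^ 2)) by (rewrite <- ln_1; apply ln_increasing; nra).
  assert (Hatan : 0 < atan s) by (rewrite <- atan_0; apply atan_increasing; lra).
  apply Rdiv_lt_0_compat; [apply Rmult_lt_0_compat |]; nra.
Qed.

Lemma M0_ratio_le_8 (s : R) : 0 < s -> M0_ratio s <= 8.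
Proof.
  intros Hs; unfold M0_ratio.
  assert (Hln : ln (1 + s ^ 2) <= 2 * s).
  { apply Rle_trans with (ln ((1 + s) * (1 + s))); [apply ln_le; nra |].
    rewrite ln_mult by lra.
    assert (ln (1 + s) <= s) by (rewrite <- (ln_exp s) at 2; apply ln_le, exp_ineq1_le; lra).
    lra. }
  assert (Hatan : atan s <= 2) by (pose proof (atan_bound s); pose proof PI_4; lra).
  assert (Hsum : ln (1 + s ^ 2) + s * atan s <= 4 * s) by nra.
  apply Rle_div_l; [nra |].
  assert (0 <= 1 + s ^ 2) by nra.
  apply Rle_trans with (2 * (1 + s ^ 2) * (4 * s)); [| nra].
  apply Rmult_le_compat_l; nra.
Qed.

Lemma Lub_M0_ratio :
  Lub_Rbar (fun y => exists s, 0 < s /\ y = M0_ratio s) = Finite M0.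
Proof.
  set (E := fun y => exists s, 0 < s /\ y = M0_ratio s).
  change (Lub_Rbar E = Finite (real (Lub_Rbar E))).
  destruct (Lub_Rbar_correct E) as [Hub Hlub].
  assert (Hle8 : Rbar_le (Lub_Rbar E) 8).
  { apply Hlub; intros y [s [Hs ->]]; apply M0_ratio_le_8, Hs. }
  assert (Hge : Rbar_le (M0_ratio 1) (Lub_Rbar E)).
  { apply Hub; exists 1; split; [lra | reflexivity]. }
  destruct (Lub_Rbar E); simpl in *; tauto.
Qed.

Lemma M0_ratio_le_M0 (s : R) : 0 < s -> M0_ratio s <= M0.
Proof.
  intros Hs.
  assert (Hub := proj1 (Lub_Rbar_correct (fun y => exists s, 0 < s /\ y = M0_ratio s))).
  rewrite Lub_M0_ratio in Hub; apply Hub; exists s; auto.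
Qed.

Lemma M0_pos : 0 < M0.
Proof.
  apply Rlt_le_trans with (M0_ratio 1); [apply M0_ratio_pos | apply M0_ratio_le_M0]; lra.
Qed.

Definition conv_kernel (s tau : R) : R :=
  s / ((1 + (tau * s) ^ 2) * (1 + ((1 - tau) * s) ^ 2)).

Definition conv_kernel_primitive (s tau : R) : R :=
  (ln (1 + (tau * s) ^ 2) - ln (1 + ((1 - tau) * s) ^ 2)) / (s * (s ^ 2 + 4))
  + (atan (tau * s) - atan ((1 - tau) * s)) / (s ^ 2 + 4).

Lemma is_derive_conv_kernel_primitive (s tau : R) :
  0 < s -> is_derive (conv_kernel_primitive s) tau (conv_kernel s tau).
Proof.
  intros Hs; unfold conv_kernel_primitive, conv_kernel.
  pose proof (pow2_ge_0 (tau * s)); pose proof (pow2_ge_0 ((1 - tau) * s)).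
  auto_derive; simpl in *.
  - repeat split; nra.
  - field; repeat split; nra.
Qed.

Lemma is_RInt_conv_kernel (s : R) :
  0 < s -> is_RInt (conv_kernel s) 0 1 (M0_ratio s / (1 + s ^ 2)).
Proof.
  intros Hs.
  replace (M0_ratio s / (1 + s ^ 2))
    with (minus (conv_kernel_primitive s 1) (conv_kernel_primitive s 0)).
  - apply (is_RInt_derive (conv_kernel_primitive s)); intros tau _;
      [apply is_derive_conv_kernel_primitive, Hs |].
    apply (ex_derive_continuous (V := R_NormedModule)); unfold conv_kernel.
    pose proof (pow2_ge_0 (tau * s)); pose proof (pow2_ge_0 ((1 - tau) * s)).
    auto_derive; simpl in *; repeat split; nra.
  - unfold minus, plus, opp; simpl; unfold conv_kernel_primitive, M0_ratio.
    rewrite Rminus_0_r, Rminus_eq_0, !Rmult_0_l, !Rmult_1_l, atan_0.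
    replace (1 + 0 ^ 2) with 1 by ring; rewrite ln_1; field; nra.
Qed.

Lemma conv_kernel_integral_le (s : R) :
  0 <= s -> exists I, is_RInt (conv_kernel s) 0 1 I /\ I <= M0 / (1 + s ^ 2).
Proof.
  intros Hs; pose proof M0_pos.
  destruct (Req_dec s 0) as [-> | Hs0].
  - eexists; split; [apply (is_RInt_ext (fun _ => 0)); [| apply (is_RInt_const 0 1 0)] |].
    + intros tau _; change (0 = conv_kernel 0 tau); unfold conv_kernel, Rdiv; ring.
    + change (scal (1 - 0) 0) with ((1 - 0) * 0); unfold Rdiv; rewrite Rmult_0_r.
      apply Rmult_le_pos; [lra |]; left; apply Rinv_0_lt_compat; lra.
  - exists (M0_ratio s / (1 + s ^ 2)); split; [apply is_RInt_conv_kernel; lra |].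
    apply Rmult_le_compat_r; [left; apply Rinv_0_lt_compat; nra |].
    apply M0_ratio_le_M0; lra.
Qed.

Lemma conv_integrand_le (phi nu a b : R) (f g : C -> C) (j : nat) (p : C) (tau : R) :
  closed_sector phi p -> 0 <= tau <= 1 ->
  weighted_bound phi nu a f -> weighted_bound phi nu b g ->
  Cmod (Cpow (RtoC tau * p) j * f (RtoC tau * p) * g (p - RtoC tau * p) * p)%C
    <= Cmod p ^ j * a * b * exp (nu * Cmod p) * conv_kernel (Cmod p) tau.
Proof.
  intros Hp Htau Hf Hg; rewrite Cminus_scale.
  assert (Hfb := Hf _ (closed_sector_scale phi tau p Hp ltac:(lra))).
  assert (Hgb := Hg _ (closed_sector_scale phi (1 - tau) p Hp ltac:(lra))).
  rewrite !Cmod_mult, Cmod_pow; rewrite !Cmod_scale in * by lra.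
  set (s := Cmod p) in *; assert (Hs : 0 <= s) by apply Cmod_ge_0.
  assert (Hpow : (tau * s) ^ j <= s ^ j) by (apply pow_incr; split; nra).
  assert (Hexp : exp (nu * s) = exp (nu * (tau * s)) * exp (nu * ((1 - tau) * s)))
    by (rewrite <- exp_plus; f_equal; ring).
  assert (0 < 1 + (tau * s) ^ 2) by (pose proof (pow2_ge_0 (tau * s)); lra).
  assert (0 < 1 + ((1 - tau) * s) ^ 2) by (pose proof (pow2_ge_0 ((1 - tau) * s)); lra).
  replace (s ^ j * a * b * exp (nu * s) * conv_kernel s tau)
    with (s ^ j * (a * exp (nu * (tau * s)) / (1 + (tau * s) ^ 2))
          * (b * exp (nu * ((1 - tau) * s)) / (1 + ((1 - tau) * s) ^ 2)) * s)
    by (rewrite Hexp; unfold conv_kernel; field; lra).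
  pose proof (pow_le _ j (Rmult_le_pos _ _ (proj1 Htau) Hs)).
  pose proof (Cmod_ge_0 (f (RtoC tau * p)%C)).
  pose proof (Cmod_ge_0 (g (RtoC (1 - tau) * p)%C)).
  apply Rmult_le_compat_r; [exact Hs |].
  apply Rmult_le_compat; [nra | lra | | exact Hgb].
  apply Rmult_le_compat; [lra | lra | exact Hpow | exact Hfb].
Qed.

Lemma Cmod_conv_le (phi nu a b : R) (f g : C -> C) (j : nat) (p : C) :
  closed_sector phi p -> sector_continuous phi f -> sector_continuous phi g ->
  weighted_bound phi nu a f -> weighted_bound phi nu b g ->
  Cmod (@RInt C_R_CompleteNormedModule
          (fun tau : R => Cpow (RtoC tau * p) j * f (RtoC tau * p)
                          * g (p - RtoC tau * p) * p)%C 0 1)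
    <= Cmod p ^ j * a * b * exp (nu * Cmod p) * (M0 / (1 + Cmod p ^ 2)).
Proof.
  intros Hp Hfc Hgc Hfb Hgb.
  set (s := Cmod p); set (K := s ^ j * a * b * exp (nu * s)).
  assert (HK : 0 <= K).
  { pose proof (weighted_bound_nonneg _ _ _ _ _ Hp Hfb).
    pose proof (weighted_bound_nonneg _ _ _ _ _ Hp Hgb).
    pose proof (pow_le s j (Cmod_ge_0 p)); pose proof (exp_pos (nu * s)).
    unfold K; apply Rmult_le_pos; [apply Rmult_le_pos; [apply Rmult_le_pos |] |]; lra. }
  destruct (conv_kernel_integral_le s (Cmod_ge_0 p)) as [I [HI HIle]].
  assert (HL := RInt_correct _ 0 1
    (ex_RInt_conv_integrand _ _ _ p Hp (sector_continuous_pmul phi f j Hfc) Hgc)).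
  apply Rle_trans with (K * I); [| apply Rmult_le_compat_l; assumption].
  rewrite Cmod_norm.
  refine (norm_RInt_le _ (fun tau => scal K (conv_kernel s tau)) 0 1 _ _ ltac:(lra)
            (fun tau Htau => _) HL (is_RInt_scal _ _ _ K _ HI)).
  simpl; rewrite <- Cmod_norm.
  exact (conv_integrand_le phi nu a b f g j p tau Hp Htau Hfb Hgb).
Qed.

Theorem lemma11 (T phi nu : R) (F G : C -> R -> C) (j : nat) :
  0 < T -> 0 < phi < PI / 6 -> 0 < nu ->
  in_A T phi nu F -> in_A T phi nu G ->
  forall (p : C) (t : R), closed_sector phi p -> 0 <= t <= T ->
    Cmod (conv (pmul j F) G p t) <=
      Cmod p ^ j * exp (nu * Cmod p) / (M0 * (1 + Cmod p ^ 2))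
        * nu_norm T phi nu F * nu_norm T phi nu G.
Proof.
  intros _ _ _ [HF HFfin] [HG HGfin] p t Hp Ht.
  destruct (HF t Ht) as [_ HFc], (HG t Ht) as [_ HGc].
  eapply Rle_trans.
  - apply (Cmod_conv_le phi nu (weighted_sup T phi nu F) (weighted_sup T phi nu G)
             (fun q => F q t) (fun q => G q t) j p Hp HFc HGc);
      apply weighted_bound_weighted_sup; assumption.
  - pose proof M0_pos; pose proof (pow2_ge_0 (Cmod p)).
    right; unfold nu_norm, weighted_sup; field; lra.
Qed.
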